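(* If $\delta$ is a small perturbation of the DR data $(L,b)\underset{p}{\overset{i}{\rightleftarrows}}(M,b),\ h$, then the perturbed data $(L,b_1)\underset{p_1}{\overset{i_1}{\rightleftarrows}}(M,b+\delta),\ h_1$ is a DR if and only if $p\,(A h^{2} A + A h + h A)\,i = 0$.
   Context: An HE data (homotopy equivalence data) consists of two (co)chain complexes $(L,b)$, $(M,b)$, quasi-isomorphisms $i:L\to M$ and $p:M\to L$, and a homotopy $h$ on $M$ with $ip = 1 + bh + hb$. A DR (deformation retract) is an HE data which in addition satisfies $pi = 1$. A perturbation $\delta$ is a map on $M$ of the same degree as $b$ with $(b+\delta)^2=0$; it is small if $1-\delta h$ is invertible. In that case $A=(1-\delta h)^{-1}\delta$, and the perturbed data is $i_1 = i + hAi$, $p_1 = p + pAh$, $h_1 = h + hAh$, $b_1 = b + pAi$ (which is again an HE data by the main perturbation lemma). *)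

(* Complexes are modelled as abelian groups (zmodType) with
   additive endomorphisms as differentials. *)
From HB Require Import structures.
From mathcomp Require Import all_boot all_order all_algebra.
Set Implicit Arguments. Unset Strict Implicit. Unset Printing Implicit Defensive.
Import GRing.Theory.
Local Open Scope ring_scope.

Definition additive_map (U V : zmodType) (f : U -> V) : Prop :=
  forall x y, f (x - y) = f x - f y.

Record HE_data (L M : zmodType) (bL : L -> L) (bM : M -> M)
    (i : L -> M) (p : M -> L) (h : M -> M) : Prop := {
  HE_bL_add : additive_map bL;
  HE_bM_add : additive_map bM;
  HE_i_add : additive_map i;
  HE_p_add : additive_map p;
  HE_h_add : additive_map h;
  HE_bL_sq : forall x, bL (bL x) = 0;
  HE_bM_sq : forall m, bM (bM m) = 0;
  HE_i_chain : forall x, bM (i x) = i (bL x);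
  HE_p_chain : forall m, bL (p m) = p (bM m);
  HE_homotopy : forall m, i (p m) = m + bM (h m) + h (bM m)
}.

Definition DR (L M : zmodType) (bL : L -> L) (bM : M -> M)
    (i : L -> M) (p : M -> L) (h : M -> M) : Prop :=
  HE_data bL bM i p h /\ forall x, p (i x) = x.

(* delta is a perturbation of the differential bM: (bM + delta)^2 = 0 *)
Definition perturbation (M : zmodType) (bM delta : M -> M) : Prop :=
  additive_map delta /\ forall m, bM (bM m) + bM (delta m) + delta (bM m) + delta (delta m) = 0.

Definition inverse_of_one_minus (M : zmodType) (delta h g : M -> M) : Prop :=
  (forall m, g (m - delta (h m)) = m) /\ (forall m, g m - delta (h (g m)) = m).

(** Write A = (1 - δh)^-1 δ, so that A = δ + δhA = δ + Ahδ.  The basic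
    identity bA + Ab + AipA = 0 follows by sandwiching its left-hand side
    between 1 - δh and 1 - hδ (the latter is invertible, with inverse 1 + hA):
    there it collapses to bδ + δb + δδ = (b + δ)^2 - b^2 = 0.  Every axiom of
    the perturbed HE data is a linear combination of these three identities
    and those of the original data.
    Finally p1 i1 = pi + p(Ah^2A + Ah + hA)i, so when pi = 1 the perturbed
    data is a DR exactly when the last term vanishes. *)

From HB Require Import structures.
From mathcomp Require Import all_boot all_order all_algebra.
Import GRing.Theory.
Local Open Scope ring_scope.
Set Implicit Arguments. Unset Strict Implicit. Unset Printing Implicit Defensive.

(* A reflexive decision procedure for equalities in an abelian group:
   atoms are indexed in an environment and both sides are compared through
   their integer coefficient lists. *)
Inductive zmod_expr :=
  | ZAtom of nat
  | ZAdd of zmod_expr & zmod_expr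
  | ZOpp of zmod_expr
  | ZZero.

Fixpoint zmod_eval (V : zmodType) (env : seq V) (e : zmod_expr) : V :=
  match e with
  | ZAtom n => nth 0 env n
  | ZAdd a b => zmod_eval env a + zmod_eval env b
  | ZOpp a => - zmod_eval env a
  | ZZero => 0
  end.

Fixpoint coef_add (c1 c2 : seq int) : seq int :=
  match c1, c2 with
  | [::], _ => c2
  | _, [::] => c1
  | a :: c1', b :: c2' => (a + b) :: coef_add c1' c2'
  end.

Definition coef_opp (c : seq int) : seq int := map -%R c.

Definition coef_atom (n : nat) : seq int := rcons (nseq n 0) 1.

Fixpoint coefs (e : zmod_expr) : seq int :=
  match e with
  | ZAtom n => coef_atom n
  | ZAdd a b => coef_add (coefs a) (coefs b)
  | ZOpp a => coef_opp (coefs a)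
  | ZZero => [::]
  end.

Fixpoint coef_eval (V : zmodType) (env : seq V) (c : seq int) : V :=
  if c is k :: c' then head 0 env *~ k + coef_eval (behead env) c' else 0.

Section CoefEval.
Variables (V : zmodType) (env : seq V).

Lemma coef_eval_add c1 c2 :
  coef_eval env (coef_add c1 c2) = coef_eval env c1 + coef_eval env c2.
Proof.
elim: c1 c2 env => [|a c1 IHc] [|b c2] env' /=; rewrite ?add0r ?addr0 //.
by rewrite IHc mulrzDr addrACA.
Qed.

Lemma coef_eval_opp c : coef_eval env (coef_opp c) = - coef_eval env c.
Proof.
elim: c env => [|a c IHc] env' /=; first by rewrite oppr0.
by rewrite IHc mulrNz opprD.
Qed.

Lemma coef_eval_atom n : coef_eval env (coef_atom n) = nth 0 env n.
Proof.
elim: n env => [|n IHn] [|x env'] /=;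
  by rewrite ?mulr1z ?addr0 ?mulr0z ?add0r ?IHn ?nth_nil.
Qed.

Lemma zmod_eval_coefs e : zmod_eval env e = coef_eval env (coefs e).
Proof.
elim: e => [n|a IHa b IHb|a IHa|] //=.
- by rewrite coef_eval_atom.
- by rewrite coef_eval_add IHa IHb.
- by rewrite coef_eval_opp IHa.
Qed.

Lemma coef_eval_eq0 c : all (eq_op^~ 0) c -> coef_eval env c = 0.
Proof.
elim: c env => [|a c IHc] env' //= /andP[/eqP-> /IHc->].
by rewrite mulr0z addr0.
Qed.

Lemma zmod_eval_eq e1 e2 :
  all (eq_op^~ 0) (coefs (ZAdd e1 (ZOpp e2))) -> zmod_eval env e1 = zmod_eval env e2.
Proof.
move=> /coef_eval_eq0; rewrite -zmod_eval_coefs /= => /eqP.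
by rewrite subr_eq0 => /eqP.
Qed.

End CoefEval.

Ltac zmod_index x l :=
  lazymatch l with
  | cons x _ => constr:(0%N)
  | cons _ ?l' => let n := zmod_index x l' in constr:(S n)
  end.

Ltac zmod_atoms e acc :=
  lazymatch e with
  | (?a + ?b)%R => let acc := zmod_atoms a acc in zmod_atoms b acc
  | (- ?a)%R => zmod_atoms a acc
  | 0%R => acc
  | _ => match constr:(tt) with
         | _ => let _ := zmod_index e acc in acc
         | _ => constr:(cons e acc)
         end
  end.

Ltac zmod_reify e env :=
  lazymatch e with
  | (?a + ?b)%R =>
      let x := zmod_reify a env in let y := zmod_reify b env in constr:(ZAdd x y)
  | (- ?a)%R => let x := zmod_reify a env in constr:(ZOpp x)
  | 0%R => constr:(ZZero)
  | _ => let n := zmod_index e env in constr:(ZAtom n)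
  end.

(* Atoms are compared syntactically, so [/=] first erases the canonical
   structure wrappers that rewriting with [raddfD] & co. leaves around maps. *)
Ltac zmod :=
  rewrite /=;
  lazymatch goal with
  | |- @eq ?V ?l ?r =>
    let env := zmod_atoms l (@nil V) in
    let env := zmod_atoms r env in
    let el := zmod_reify l env in
    let er := zmod_reify r env in
    change (zmod_eval env el = zmod_eval env er);
    apply: zmod_eval_eq; vm_compute; reflexivity
  end.

(* Applied once per hypothesis, this reduces a goal to the statement that it
   is a linear combination of the hypotheses, which [zmod] then checks. *)
Lemma eq_lincomb (V : zmodType) (a b l r : V) : a = b -> l + b = r + a -> l = r.
Proof. by move=> -> /addIr. Qed.

Section Perturbation.
Variables (L M : zmodType) (bL : L -> L) (bM : M -> M).
Variables (i : L -> M) (p : M -> L) (h : M -> M).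
Hypothesis HE : HE_data bL bM i p h.
Variables delta g : M -> M.
Hypothesis pert : perturbation bM delta.
Hypothesis inv : inverse_of_one_minus delta h g.

HB.instance Definition _ := GRing.isZmodMorphism.Build L L bL (HE_bL_add HE).
HB.instance Definition _ := GRing.isZmodMorphism.Build M M bM (HE_bM_add HE).
HB.instance Definition _ := GRing.isZmodMorphism.Build L M i (HE_i_add HE).
HB.instance Definition _ := GRing.isZmodMorphism.Build M L p (HE_p_add HE).
HB.instance Definition _ := GRing.isZmodMorphism.Build M M h (HE_h_add HE).
HB.instance Definition _ := GRing.isZmodMorphism.Build M M delta pert.1.

Lemma inverse_of_one_minus_additive : additive_map g.
Proof. exact: (can2_zmod_morphism (f := idfun \- (delta \o h)) inv.1 inv.2). Qed.

HB.instance Definition _ :=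
  GRing.isZmodMorphism.Build M M g inverse_of_one_minus_additive.

Local Notation A m := (g (delta m)).
Local Notation b1 x := (bL x + p (A (i x))).
Local Notation i1 x := (i x + h (A (i x))).
Local Notation p1 m := (p m + p (A (h m))).
Local Notation h1 m := (h m + h (A (h m))).

Lemma A_sub_delta_h m : A m - delta (h (A m)) = delta m.
Proof. exact: inv.2. Qed.

Lemma A_sub_h_delta m : A (m - h (delta m)) = delta m.
Proof. by rewrite raddfB inv.1. Qed.

Lemma eq0_of_sub_delta_h m : m - delta (h m) = 0 -> m = 0.
Proof. by move=> m0; rewrite -[m]inv.1 m0 raddf0. Qed.

Lemma one_plus_hA_right_inverse m :
  (m + h (A m)) - h (delta (m + h (A m))) = m.
Proof.
have := congr1 h (A_sub_delta_h m); rewrite raddfB => hE.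
by apply: (eq_lincomb hE); rewrite !raddfD; zmod.
Qed.

Lemma perturbation_basic_identity m : bM (A m) + A (bM m) + A (i (p (A m))) = 0.
Proof.
rewrite -(one_plus_hA_right_inverse m); move: (m + _) => n.
apply: eq0_of_sub_delta_h; rewrite A_sub_h_delta.
apply: (eq_lincomb (A_sub_delta_h (bM (n - h (delta n))))).
apply: (eq_lincomb (A_sub_delta_h (i (p (delta n))))).
apply: (eq_lincomb (pert.2 n)).
rewrite (HE_homotopy HE) (HE_bM_sq HE) !raddfD !raddfN; zmod.
Qed.

Lemma raddf_perturbation_basic_identity (V : zmodType) (f : {additive M -> V}) m :
  f (bM (A m)) + f (A (bM m)) + f (A (i (p (A m)))) = 0.
Proof. by rewrite -!raddfD perturbation_basic_identity raddf0. Qed.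

Lemma perturbed_bL_sq x : b1 (b1 x) = 0.
Proof.
apply: (eq_lincomb (raddf_perturbation_basic_identity p (i x))).
by rewrite !raddfD /= (HE_bL_sq HE) -(HE_i_chain HE) !(HE_p_chain HE); zmod.
Qed.

Lemma perturbed_bM_sq m : bM (bM m + delta m) + delta (bM m + delta m) = 0.
Proof. by rewrite !raddfD addrA; exact: pert.2. Qed.

Lemma perturbed_i_chain x : bM (i1 x) + delta (i1 x) = i1 (b1 x).
Proof.
apply: (eq_lincomb (esym (A_sub_delta_h (i x)))).
apply: (eq_lincomb (esym (raddf_perturbation_basic_identity h (i x)))).
by rewrite !raddfD /= -!(HE_i_chain HE) !(HE_homotopy HE) !raddfD; zmod.
Qed.

Lemma perturbed_p_chain m : b1 (p1 m) = p1 (bM m + delta m).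
Proof.
apply: (eq_lincomb (congr1 p (A_sub_h_delta m))).
apply: (eq_lincomb (raddf_perturbation_basic_identity p (h m))).
by rewrite !raddfD /= !(HE_p_chain HE) !(HE_homotopy HE) !raddfD !raddfN; zmod.
Qed.

Lemma perturbed_homotopy m :
  i1 (p1 m) = m + (bM (h1 m) + delta (h1 m)) + h1 (bM m + delta m).
Proof.
apply: (eq_lincomb (A_sub_delta_h (h m))).
apply: (eq_lincomb (congr1 h (A_sub_h_delta m))).
apply: (eq_lincomb (raddf_perturbation_basic_identity h (h m))).
by rewrite !raddfD /= !(HE_homotopy HE) !raddfD !raddfN; zmod.
Qed.

Theorem perturbed_HE_data :
  HE_data (fun x => b1 x) (fun m => bM m + delta m)
    (fun x => i1 x) (fun m => p1 m) (fun m => h1 m).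
Proof.
split.
1-5: by move=> x y; rewrite !raddfB; zmod.
- exact: perturbed_bL_sq.
- exact: perturbed_bM_sq.
- exact: perturbed_i_chain.
- exact: perturbed_p_chain.
- exact: perturbed_homotopy.
Qed.

Lemma perturbed_p_i x :
  p1 (i1 x) = p (i x) + p (A (h (h (A (i x)))) + A (h (i x)) + h (A (i x))).
Proof. by rewrite !raddfD; zmod. Qed.

End Perturbation.

Theorem mainTheorem2 (L M : zmodType) (bL : L -> L) (bM : M -> M)
    (i : L -> M) (p : M -> L) (h : M -> M) (delta g : M -> M) :
  DR bL bM i p h ->
  perturbation bM delta ->
  inverse_of_one_minus delta h g ->
  let A := fun m => g (delta m) in
  DR (fun x => bL x + p (A (i x)))
     (fun m => bM m + delta m)
     (fun x => i x + h (A (i x)))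
     (fun m => p m + p (A (h m)))
     (fun m => h m + h (A (h m)))
  <-> (forall x, p (A (h (h (A (i x)))) + A (h (i x)) + h (A (i x))) = 0).
Proof.
move=> [HE pi_id] pert inv /=.
split=> [[_ p1i1_id] x | defect0].
  apply: (@addrI _ (p (i x))).
  by rewrite -(perturbed_p_i HE pert inv) p1i1_id pi_id addr0.
split=> [|x]; first exact: perturbed_HE_data.
by rewrite (perturbed_p_i HE pert inv) defect0 addr0 pi_id.
Qed.
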